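(* Let $x^*$, $\Delta x$, $S^k$, $L_{s,k}f$, $\beta_k$ and $\zeta$ be as defined in the context, with $f\in C^4(I)$ on an open interval $I$ containing all stencil points for small $\Delta x$. Let $d_0=\frac{1}{35}$, $d_1=\frac{12}{35}$, $d_2=\frac{18}{35}$, $d_3=\frac{4}{35}$, let $s\geq 1$ be an integer, and (taking $\epsilon=0$) define the nonlinear weights $$\omega_k=\frac{\alpha_k}{\sum_{q=0}^3\alpha_q},\qquad \alpha_k=d_k\left[1+\left(\frac{\zeta}{\beta_k^2}\right)^{s}\right],\qquad k=0,1,2,3.$$ Then, as $\Delta x\to 0$ (for $\Delta x$ small enough that all $\beta_k>0$ in the cases below): (i) if $f'(x^* )\neq 0$, then $\omega_k=d_k+O(\Delta x^{6s})$; (ii) if $f'(x^* )=0$ and $f''(x^* )\neq0$, then $\omega_k=d_k+O(\Delta x^{4s})$; (iii) if $f'(x^* )=f''(x^* )=0$ and $f'''(x^* )\neq 0$, then $\omega_k=d_k+O(\Delta x^{2s})$. Consequently the condition $\omega_k-d_k=O(\Delta x^4)$ for $k=0,1,2,3$ holds for every $s\ge1$ in cases (i) and (ii), and for every $s\geq 2$ in case (iii).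
   Context: Setup: $x^*\in\mathbb{R}$, $\Delta x>0$, $S^k=\{x^*+(k+i-\tfrac{7}{2})\Delta x : i=0,1,2,3\}$ for $k=0,1,2,3$ (the four 4-point sub-stencils $\{x_{j+k-3},\dots,x_{j+k}\}$ of a uniform grid, with $x^*=x_{j+\frac12}$). For $s'\in\{1,2,3\}$, $L_{s',k}f:=\sum_{x_l\in S^k}c^{[s']}_{k,l}f(x_l)$ where the coefficients uniquely solve $\sum_{x_l\in S^k}c^{[s']}_{k,l}\frac{(x_l-x^* )^m}{m!}=\Delta x^{s'}\delta_{s',m}$ for $m=0,1,2,3$. With fixed parameters $\xi_1,\xi_2\in(0,1]$, $\beta_k=\xi_1|L_{1,k}f|+\xi_2|L_{2,k}f|+|L_{3,k}f|$ and $\zeta=|\beta_0-\beta_3|^2$. The numbers $d_k$ are the ideal (linear) weights of the seventh-order upstream central reconstruction. *)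

From Stdlib Require Import Reals Lra Arith.
Open Scope R_scope.

(* Stencil point x_{j+k-3+i} = x* + (k + i - 7/2) dx, for i = 0..3 (sub-stencil S^k). *)
Definition pt (xs dx : R) (k i : nat) : R := xs + (INR k + INR i - 7/2) * dx.

(* Coefficient family c dx s' k i  (= c^{[s']}_{k,l} for x_l the i-th point of S^k)
   solves the moment system defining L_{s',k}, for every dx > 0. *)
Definition is_stencil_coeff (xs : R) (c : R -> nat -> nat -> nat -> R) : Prop :=
  forall dx, 0 < dx -> forall sp k m : nat,
    (1 <= sp <= 3)%nat -> (k <= 3)%nat -> (m <= 3)%nat ->
    sum_f_R0 (fun i => c dx sp k i * ((pt xs dx k i - xs) ^ m / INR (Factorial.fact m))) 3
    = dx ^ sp * (if Nat.eqb sp m then 1 else 0).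

Definition Lop (xs : R) (c : R -> nat -> nat -> nat -> R) (f : R -> R)
  (sp k : nat) (dx : R) : R :=
  sum_f_R0 (fun i => c dx sp k i * f (pt xs dx k i)) 3.

Definition beta (xs xi1 xi2 : R) c f (k : nat) (dx : R) : R :=
  xi1 * Rabs (Lop xs c f 1 k dx) + xi2 * Rabs (Lop xs c f 2 k dx)
  + Rabs (Lop xs c f 3 k dx).

Definition zeta (xs xi1 xi2 : R) c f (dx : R) : R :=
  Rabs (beta xs xi1 xi2 c f 0 dx - beta xs xi1 xi2 c f 3 dx) ^ 2.

(* ideal weights of the seventh-order upstream central reconstruction *)
Definition dlin (k : nat) : R :=
  match k with
  | 0%nat => 1/35
  | 1%nat => 12/35
  | 2%nat => 18/35
  | _ => 4/35
  end.

Definition alpha (xs xi1 xi2 : R) c f (s k : nat) (dx : R) : R :=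
  dlin k * (1 + (zeta xs xi1 xi2 c f dx / (beta xs xi1 xi2 c f k dx) ^ 2) ^ s).

Definition omega (xs xi1 xi2 : R) c f (s k : nat) (dx : R) : R :=
  alpha xs xi1 xi2 c f s k dx /
  sum_f_R0 (fun q => alpha xs xi1 xi2 c f s q dx) 3.

Definition bigO0 (g h : R -> R) : Prop :=
  exists C delta, 0 < delta /\
    forall dx, 0 < dx < delta -> Rabs (g dx) <= C * Rabs (h dx).

From Stdlib Require Import Reals Lra Lia.
Open Scope R_scope.

(* Taylor expansion about x* together with the moment conditions defining the coefficients
   gives L_{s',k} f = Δx^{s'} f^{(s')}(x* ) + O(Δx^4) uniformly in k, the coefficients
   themselves being bounded independently of Δx.  Hence β_0 - β_3 = O(Δx^4) and ζ = O(Δx^8),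
   while the first nonvanishing derivative f^{(p)}(x* ) keeps every β_k above a multiple of
   Δx^p.  So each (ζ/β_k^2)^s is O(Δx^{(8-2p)s}), and since the d_k are nonnegative and sum
   to 1, |ω_k - d_k| is bounded by the largest of these quantities. *)

Lemma stencil_moment_scaled xs dx (w : nat -> R) sp k m : 0 < dx ->
  sum_f_R0 (fun i => w i * ((pt xs dx k i - xs) ^ m / INR (Factorial.fact m))) 3
    = dx ^ sp * (if Nat.eqb sp m then 1 else 0) ->
  sum_f_R0 (fun i => w i * (INR k + INR i - 7/2) ^ m) 3
    = if Nat.eqb sp m then INR (Factorial.fact m) else 0.
Proof.
  intros Hdx Hmom.
  assert (Hfact : INR (Factorial.fact m) <> 0) by apply INR_fact_neq_0.
  assert (Hscale0 : dx ^ m / INR (Factorial.fact m) <> 0).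
  { unfold Rdiv. apply Rmult_integral_contrapositive_currified.
    - apply pow_nonzero; lra.
    - apply Rinv_neq_0_compat; exact Hfact. }
  assert (Hscale :
    sum_f_R0 (fun i => w i * ((pt xs dx k i - xs) ^ m / INR (Factorial.fact m))) 3
    = dx ^ m / INR (Factorial.fact m) * sum_f_R0 (fun i => w i * (INR k + INR i - 7/2) ^ m) 3).
  { rewrite scal_sum. apply sum_eq. intros i _. unfold pt.
    replace (xs + (INR k + INR i - 7/2) * dx - xs) with ((INR k + INR i - 7/2) * dx) by ring.
    rewrite Rpow_mult_distr. field. exact Hfact. }
  apply (Rmult_eq_reg_l (dx ^ m / INR (Factorial.fact m))); [|exact Hscale0].
  rewrite <- Hscale, Hmom.
  destruct (Nat.eqb sp m) eqn:E.
  - apply Nat.eqb_eq in E. subst. field. exact Hfact.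
  - ring.
Qed.

Lemma stencil_coeff_abs_le xs c dx sp k i : is_stencil_coeff xs c -> 0 < dx ->
  (1 <= sp <= 3)%nat -> (k <= 3)%nat -> (i <= 3)%nat -> Rabs (c dx sp k i) <= 7.
Proof.
  intros Hc Hdx Hsp Hk Hi.
  assert (Hm : forall m, (m <= 3)%nat ->
    sum_f_R0 (fun i => c dx sp k i * (INR k + INR i - 7/2) ^ m) 3
    = if Nat.eqb sp m then INR (Factorial.fact m) else 0).
  { intros m Hm. exact (stencil_moment_scaled xs dx _ sp k m Hdx (Hc dx Hdx sp k m Hsp Hk Hm)). }
  pose proof (Hm 0%nat ltac:(lia)) as H0. pose proof (Hm 1%nat ltac:(lia)) as H1.
  pose proof (Hm 2%nat ltac:(lia)) as H2. pose proof (Hm 3%nat ltac:(lia)) as H3.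
  clear Hm.
  assert (Hsp' : sp = 1%nat \/ sp = 2%nat \/ sp = 3%nat) by lia.
  assert (Hk' : k = 0%nat \/ k = 1%nat \/ k = 2%nat \/ k = 3%nat) by lia.
  assert (Hi' : i = 0%nat \/ i = 1%nat \/ i = 2%nat \/ i = 3%nat) by lia.
  (* For fixed (sp, k) the moment equations form an invertible Vandermonde system, so lra
     can read off each coefficient. *)
  destruct Hsp' as [-> | [-> | ->]]; destruct Hk' as [-> | [-> | [-> | ->]]];
    simpl in H0, H1, H2, H3;
    destruct Hi' as [-> | [-> | [-> | ->]]]; apply Rabs_le; split; lra.
Qed.

Lemma pt_dist_le xs dx k i : 0 <= dx -> (k <= 3)%nat -> (i <= 3)%nat ->
  Rabs (pt xs dx k i - xs) <= 7/2 * dx.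
Proof.
  intros Hdx Hk Hi. unfold pt.
  replace (xs + (INR k + INR i - 7/2) * dx - xs) with ((INR k + INR i - 7/2) * dx) by ring.
  rewrite Rabs_mult, (Rabs_pos_eq dx Hdx). apply Rmult_le_compat_r; [exact Hdx|].
  apply le_INR in Hk, Hi. pose proof (pos_INR k). pose proof (pos_INR i).
  simpl in Hk, Hi. apply Rabs_le. split; lra.
Qed.

Definition taylor3 (D : nat -> R) (xs x : R) : R :=
  sum_f_R0 (fun m => D m * ((x - xs) ^ m / INR (Factorial.fact m))) 3.

Lemma Lop_taylor3 xs c D dx sp k : is_stencil_coeff xs c -> 0 < dx ->
  (1 <= sp <= 3)%nat -> (k <= 3)%nat -> Lop xs c (taylor3 D xs) sp k dx = dx ^ sp * D sp.
Proof.
  intros Hc Hdx Hsp Hk.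
  pose proof (Hc dx Hdx sp k 0%nat Hsp Hk ltac:(lia)) as H0.
  pose proof (Hc dx Hdx sp k 1%nat Hsp Hk ltac:(lia)) as H1.
  pose proof (Hc dx Hdx sp k 2%nat Hsp Hk ltac:(lia)) as H2.
  pose proof (Hc dx Hdx sp k 3%nat Hsp Hk ltac:(lia)) as H3.
  cbn [sum_f_R0] in H0, H1, H2, H3.
  transitivity (D 0%nat * (dx ^ sp * (if Nat.eqb sp 0 then 1 else 0))
    + D 1%nat * (dx ^ sp * (if Nat.eqb sp 1 then 1 else 0))
    + D 2%nat * (dx ^ sp * (if Nat.eqb sp 2 then 1 else 0))
    + D 3%nat * (dx ^ sp * (if Nat.eqb sp 3 then 1 else 0))).
  - rewrite <- H0, <- H1, <- H2, <- H3. unfold Lop, taylor3. cbn [sum_f_R0]. ring.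
  - assert (Hsp' : sp = 1%nat \/ sp = 2%nat \/ sp = 3%nat) by lia.
    destruct Hsp' as [-> | [-> | ->]]; simpl; ring.
Qed.

Lemma Lop_sub xs c f g sp k dx :
  Lop xs c f sp k dx - Lop xs c g sp k dx = Lop xs c (fun x => f x - g x) sp k dx.
Proof. unfold Lop. cbn [sum_f_R0]. ring. Qed.

Lemma Lop_abs_le xs c g E dx sp k : is_stencil_coeff xs c -> 0 < dx ->
  (1 <= sp <= 3)%nat -> (k <= 3)%nat ->
  (forall i, (i <= 3)%nat -> Rabs (g (pt xs dx k i)) <= E) ->
  Rabs (Lop xs c g sp k dx) <= 28 * E.
Proof.
  intros Hc Hdx Hsp Hk Hg.
  assert (Hterm : forall i, (i <= 3)%nat -> Rabs (c dx sp k i * g (pt xs dx k i)) <= 7 * E).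
  { intros i Hi. rewrite Rabs_mult.
    apply Rmult_le_compat; try apply Rabs_pos.
    - exact (stencil_coeff_abs_le xs c dx sp k i Hc Hdx Hsp Hk Hi).
    - exact (Hg i Hi). }
  unfold Lop. eapply Rle_trans; [apply sum_f_R0_triangle|]. cbn [sum_f_R0].
  pose proof (Hterm 0%nat ltac:(lia)). pose proof (Hterm 1%nat ltac:(lia)).
  pose proof (Hterm 2%nat ltac:(lia)). pose proof (Hterm 3%nat ltac:(lia)).
  lra.
Qed.

Lemma Lop_consistency xs c f D M d dx sp k : is_stencil_coeff xs c -> 0 <= M ->
  (forall x, Rabs (x - xs) < d -> Rabs (f x - taylor3 D xs x) <= M * Rabs (x - xs) ^ 4) ->
  0 < dx < d / 4 -> (1 <= sp <= 3)%nat -> (k <= 3)%nat ->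
  Rabs (Lop xs c f sp k dx - dx ^ sp * D sp) <= 28 * (M * (7/2) ^ 4) * dx ^ 4.
Proof.
  intros Hc HM Htaylor Hdx Hsp Hk.
  rewrite <- (Lop_taylor3 xs c D dx sp k) by (auto; lra).
  rewrite Lop_sub.
  replace (28 * (M * (7/2) ^ 4) * dx ^ 4) with (28 * (M * ((7/2) ^ 4 * dx ^ 4))) by ring.
  apply Lop_abs_le; auto; [lra|].
  intros i Hi. pose proof (pt_dist_le xs dx k i ltac:(lra) Hk Hi) as Hpt.
  eapply Rle_trans; [apply Htaylor; lra|].
  apply Rmult_le_compat_l; [exact HM|]. rewrite <- Rpow_mult_distr.
  apply pow_incr. split; [apply Rabs_pos | exact Hpt].
Qed.

Lemma pow_bound_of_deriv (g g' : R -> R) K n d : 0 <= K ->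
  (forall h, Rabs h < d -> derivable_pt_lim g h (g' h)) ->
  (forall h, Rabs h < d -> Rabs (g' h) <= K * Rabs h ^ n) -> g 0 = 0 ->
  forall h, Rabs h < d -> Rabs (g h) <= K * Rabs h ^ S n.
Proof.
  intros HK Hder Hbound Hg0 h Hh.
  assert (Hbetween : forall t, Rmin 0 h <= t <= Rmax 0 h -> Rabs t <= Rabs h).
  { intros t Ht. unfold Rmin, Rmax in Ht.
    destruct (Rle_dec 0 h); unfold Rabs; destruct (Rcase_abs t), (Rcase_abs h); lra. }
  destruct (MVT_abs g g' 0 h) as [t [Hmvt Ht]].
  { intros t Ht. apply Hder. pose proof (Hbetween t Ht). lra. }
  rewrite Hg0, !Rminus_0_r in Hmvt. rewrite Hmvt. simpl.
  pose proof (Hbetween t Ht) as Htl.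
  assert (Rabs t ^ n <= Rabs h ^ n) by (apply pow_incr; split; [apply Rabs_pos | exact Htl]).
  pose proof (Hbound t ltac:(lra)).
  replace (K * (Rabs h * Rabs h ^ n)) with (K * Rabs h ^ n * Rabs h) by ring.
  apply Rmult_le_compat_r; [apply Rabs_pos|].
  eapply Rle_trans; [eassumption|]. apply Rmult_le_compat_l; assumption.
Qed.

Lemma derivable_pt_lim_cubic a0 a1 a2 a3 h :
  derivable_pt_lim (fun h => a0 + a1 * h + a2 * h ^ 2 + a3 * h ^ 3) h
    (a1 + 2 * a2 * h + 3 * a3 * h ^ 2).
Proof.
  replace (a1 + 2 * a2 * h + 3 * a3 * h ^ 2) with
    (0 + a1 * 1 + a2 * (INR 2 * h ^ 1) + a3 * (INR 3 * h ^ 2)) by (simpl; ring).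
  repeat apply derivable_pt_lim_plus; try apply derivable_pt_lim_const;
    apply derivable_pt_lim_scal;
    [apply derivable_pt_lim_id | apply derivable_pt_lim_pow | apply derivable_pt_lim_pow].
Qed.

Lemma taylor_remainder_step (F F' : R -> R) xs a1 a2 a3 K n d : 0 <= K ->
  (forall h, Rabs h < d -> derivable_pt_lim F (xs + h) (F' (xs + h))) ->
  (forall h, Rabs h < d ->
     Rabs (F' (xs + h) - (a1 + 2 * a2 * h + 3 * a3 * h ^ 2)) <= K * Rabs h ^ n) ->
  forall h, Rabs h < d ->
    Rabs (F (xs + h) - (F xs + a1 * h + a2 * h ^ 2 + a3 * h ^ 3)) <= K * Rabs h ^ S n.
Proof.
  intros HK Hder Hbound.
  apply (pow_bound_of_deriv _ (fun h => F' (xs + h) - (a1 + 2 * a2 * h + 3 * a3 * h ^ 2)));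
    auto.
  - intros h Hh. apply derivable_pt_lim_minus; [|apply derivable_pt_lim_cubic].
    intros eps Heps. destruct (Hder h Hh eps Heps) as [delta Hdelta].
    exists delta. intros t Ht Htd. rewrite <- Rplus_assoc. exact (Hdelta t Ht Htd).
  - rewrite Rplus_0_r. ring.
Qed.

Lemma continuity_pt_locally_bounded g x : continuity_pt g x ->
  exists d, 0 < d /\ forall h, Rabs h < d -> Rabs (g (x + h)) <= Rabs (g x) + 1.
Proof.
  intros Hg. destruct (Hg 1 Rlt_0_1) as [d [Hd Hclose]].
  exists d. split; [exact Hd|]. intros h Hh.
  destruct (Req_dec h 0) as [-> | Hh0].
  - rewrite Rplus_0_r. lra.
  - assert (Hdist : R_dist (g (x + h)) (g x) < 1).
    { apply Hclose. simpl. unfold D_x, no_cond, R_dist.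
      replace (x + h - x) with h by ring. repeat split; [lra | exact Hh]. }
    unfold R_dist in Hdist. pose proof (Rabs_triang_inv (g (x + h)) (g x)). lra.
Qed.

Definition derivs_at (f f1 f2 f3 : R -> R) (xs : R) (m : nat) : R :=
  match m with 0%nat => f xs | 1%nat => f1 xs | 2%nat => f2 xs | _ => f3 xs end.

Lemma taylor3_remainder (xs a b : R) (f f1 f2 f3 f4 : R -> R)
  (HI : a < xs < b)
  (Hf1 : forall x, a < x < b -> derivable_pt_lim f x (f1 x))
  (Hf2 : forall x, a < x < b -> derivable_pt_lim f1 x (f2 x))
  (Hf3 : forall x, a < x < b -> derivable_pt_lim f2 x (f3 x))
  (Hf4 : forall x, a < x < b -> derivable_pt_lim f3 x (f4 x))
  (Hf4c : continuity_pt f4 xs) :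
  exists M d, 0 <= M /\ 0 < d /\ forall x, Rabs (x - xs) < d ->
    Rabs (f x - taylor3 (derivs_at f f1 f2 f3 xs) xs x) <= M * Rabs (x - xs) ^ 4.
Proof.
  destruct (continuity_pt_locally_bounded f4 xs Hf4c) as [d1 [Hd1 Hbound]].
  set (M := Rabs (f4 xs) + 1).
  assert (HM : 0 <= M) by (unfold M; pose proof (Rabs_pos (f4 xs)); lra).
  set (d := Rmin d1 (Rmin (xs - a) (b - xs))).
  assert (Hd : 0 < d) by (unfold d; repeat apply Rmin_pos; lra).
  assert (Hd1' : d <= d1) by apply Rmin_l.
  assert (Hin : forall h, Rabs h < d -> a < xs + h < b).
  { intros h Hh. assert (d <= xs - a /\ d <= b - xs) as [] by
      (unfold d; split; eapply Rle_trans; try apply Rmin_r; try apply Rmin_l).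
    unfold Rabs in Hh; destruct (Rcase_abs h); lra. }
  assert (R3 : forall h, Rabs h < d ->
    Rabs (f3 (xs + h) - (f3 xs + 0 * h + 0 * h ^ 2 + 0 * h ^ 3)) <= M * Rabs h ^ 1).
  { apply (taylor_remainder_step f3 f4); [exact HM | intros h Hh; apply Hf4, Hin, Hh |].
    intros h Hh. rewrite pow_O, Rmult_1_r.
    replace (f4 (xs + h) - _) with (f4 (xs + h)) by ring. apply Hbound. lra. }
  assert (R2 : forall h, Rabs h < d ->
    Rabs (f2 (xs + h) - (f2 xs + f3 xs * h + 0 * h ^ 2 + 0 * h ^ 3)) <= M * Rabs h ^ 2).
  { apply (taylor_remainder_step f2 f3); [exact HM | intros h Hh; apply Hf3, Hin, Hh |].
    intros h Hh. eapply Rle_trans; [|apply (R3 h Hh)]. right. f_equal. ring. }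
  assert (R1 : forall h, Rabs h < d ->
    Rabs (f1 (xs + h) - (f1 xs + f2 xs * h + f3 xs / 2 * h ^ 2 + 0 * h ^ 3))
      <= M * Rabs h ^ 3).
  { apply (taylor_remainder_step f1 f2); [exact HM | intros h Hh; apply Hf2, Hin, Hh |].
    intros h Hh. eapply Rle_trans; [|apply (R2 h Hh)]. right. f_equal. field. }
  assert (R0 : forall h, Rabs h < d ->
    Rabs (f (xs + h) - (f xs + f1 xs * h + f2 xs / 2 * h ^ 2 + f3 xs / 6 * h ^ 3))
      <= M * Rabs h ^ 4).
  { apply (taylor_remainder_step f f1); [exact HM | intros h Hh; apply Hf1, Hin, Hh |].
    intros h Hh. eapply Rle_trans; [|apply (R1 h Hh)]. right. f_equal. field. }
  exists M, d. split; [exact HM|]. split; [exact Hd|].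
  intros x Hx. replace x with (xs + (x - xs)) at 1 by ring.
  eapply Rle_trans; [|apply (R0 _ Hx)]. right. f_equal. f_equal.
  unfold taylor3. cbn [sum_f_R0 derivs_at]. simpl. field.
Qed.

Lemma pow_antimono_le1 x m n : 0 <= x <= 1 -> (m <= n)%nat -> x ^ n <= x ^ m.
Proof.
  intros Hx Hmn. replace n with (m + (n - m))%nat by lia. rewrite pow_add.
  assert (x ^ (n - m) <= 1) by (rewrite <- (pow1 (n - m)); apply pow_incr; lra).
  assert (0 <= x ^ m) by (apply pow_le; lra). nra.
Qed.

Lemma bigO0_pow_weaken g m n : (m <= n)%nat ->
  bigO0 g (fun dx => dx ^ n) -> bigO0 g (fun dx => dx ^ m).
Proof.
  intros Hmn [C [delta [Hdelta Hg]]]. exists (Rabs C), (Rmin delta 1).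
  split; [apply Rmin_pos; lra|]. intros dx Hdx.
  assert (Rmin delta 1 <= delta) by apply Rmin_l. assert (Rmin delta 1 <= 1) by apply Rmin_r.
  rewrite (Rabs_pos_eq (dx ^ m)) by (apply pow_le; lra).
  eapply Rle_trans; [apply Hg; lra|].
  rewrite (Rabs_pos_eq (dx ^ n)) by (apply pow_le; lra).
  pose proof (pow_antimono_le1 dx m n ltac:(lra) Hmn). pose proof (pow_le dx n ltac:(lra)).
  pose proof (Rle_abs C). pose proof (Rabs_pos C). nra.
Qed.

Lemma dlin_bounds k : 0 <= dlin k <= 1.
Proof. destruct k as [|[|[|k]]]; simpl; lra. Qed.

Lemma normalized_weight_dev_le (r : nat -> R) B k :
  (forall q, (q <= 3)%nat -> 0 <= r q <= B) -> (k <= 3)%nat ->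
  Rabs (dlin k * (1 + r k) / sum_f_R0 (fun q => dlin q * (1 + r q)) 3 - dlin k) <= B.
Proof.
  intros Hr Hk.
  set (S := sum_f_R0 (fun q => dlin q * r q) 3).
  assert (HS : 0 <= S <= B).
  { unfold S. cbn [sum_f_R0 dlin].
    pose proof (Hr 0%nat ltac:(lia)). pose proof (Hr 1%nat ltac:(lia)).
    pose proof (Hr 2%nat ltac:(lia)). pose proof (Hr 3%nat ltac:(lia)). lra. }
  replace (sum_f_R0 (fun q => dlin q * (1 + r q)) 3) with (1 + S)
    by (unfold S; cbn [sum_f_R0 dlin]; field).
  replace (dlin k * (1 + r k) / (1 + S) - dlin k) with (dlin k * (r k - S) / (1 + S))
    by (field; lra).
  pose proof (dlin_bounds k). pose proof (Hr k Hk).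
  unfold Rdiv. rewrite Rabs_mult, Rabs_inv, (Rabs_pos_eq (1 + S)) by lra.
  apply (Rmult_le_reg_r (1 + S)); [lra|].
  rewrite Rmult_assoc, Rinv_l, Rmult_1_r by lra.
  rewrite Rabs_mult, (Rabs_pos_eq (dlin k)) by lra.
  assert (Rabs (r k - S) <= B) by (apply Rabs_le; split; lra).
  pose proof (Rabs_pos (r k - S)). nra.
Qed.

Definition indicator_weight (xi1 xi2 : R) (p : nat) : R :=
  match p with 1%nat => xi1 | 2%nat => xi2 | _ => 1 end.

Section SmoothnessIndicators.

Variables (xs xi1 xi2 : R) (c : R -> nat -> nat -> nat -> R) (f : R -> R) (D : nat -> R)
  (K del : R).
Hypotheses (Hxi1 : 0 < xi1 <= 1) (Hxi2 : 0 < xi2 <= 1) (HK : 0 <= K)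
  (Hcons : forall dx, 0 < dx < del -> forall sp q, (1 <= sp <= 3)%nat -> (q <= 3)%nat ->
     Rabs (Lop xs c f sp q dx - dx ^ sp * D sp) <= K * dx ^ 4).

Lemma zeta_le dx : 0 < dx < del -> zeta xs xi1 xi2 c f dx <= (6 * K * dx ^ 4) ^ 2.
Proof.
  intros Hdx.
  assert (Hdiff : forall sp, (1 <= sp <= 3)%nat ->
    Rabs (Rabs (Lop xs c f sp 0 dx) - Rabs (Lop xs c f sp 3 dx)) <= 2 * K * dx ^ 4).
  { intros sp Hsp. eapply Rle_trans; [apply Rabs_triang_inv2|].
    replace (Lop xs c f sp 0 dx - Lop xs c f sp 3 dx) with
      ((Lop xs c f sp 0 dx - dx ^ sp * D sp) - (Lop xs c f sp 3 dx - dx ^ sp * D sp)) by ring.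
    eapply Rle_trans; [apply Rabs_triang|]. rewrite Rabs_Ropp.
    pose proof (Hcons dx Hdx sp 0%nat Hsp ltac:(lia)).
    pose proof (Hcons dx Hdx sp 3%nat Hsp ltac:(lia)). lra. }
  pose proof (Hdiff 1%nat ltac:(lia)). pose proof (Hdiff 2%nat ltac:(lia)).
  pose proof (Hdiff 3%nat ltac:(lia)).
  unfold zeta. apply pow_incr. split; [apply Rabs_pos|]. unfold beta.
  set (u1 := Rabs (Lop xs c f 1 0 dx) - Rabs (Lop xs c f 1 3 dx)) in *.
  set (u2 := Rabs (Lop xs c f 2 0 dx) - Rabs (Lop xs c f 2 3 dx)) in *.
  set (u3 := Rabs (Lop xs c f 3 0 dx) - Rabs (Lop xs c f 3 3 dx)) in *.
  match goal with |- Rabs ?e <= _ =>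
    replace e with (xi1 * u1 + xi2 * u2 + u3) by (unfold u1, u2, u3; ring) end.
  eapply Rle_trans; [apply Rabs_triang|].
  eapply Rle_trans; [apply Rplus_le_compat_r, Rabs_triang|].
  rewrite !Rabs_mult, (Rabs_pos_eq xi1), (Rabs_pos_eq xi2) by lra.
  assert (0 <= K * dx ^ 4) by (apply Rmult_le_pos; [exact HK | apply pow_le; lra]).
  nra.
Qed.

Lemma beta_ge_weighted_Lop p q dx : (1 <= p <= 3)%nat ->
  indicator_weight xi1 xi2 p * Rabs (Lop xs c f p q dx) <= beta xs xi1 xi2 c f q dx.
Proof.
  intros Hp. unfold beta.
  pose proof (Rmult_le_pos xi1 _ ltac:(lra) (Rabs_pos (Lop xs c f 1 q dx))).
  pose proof (Rmult_le_pos xi2 _ ltac:(lra) (Rabs_pos (Lop xs c f 2 q dx))).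
  pose proof (Rabs_pos (Lop xs c f 3 q dx)).
  assert (Hp' : p = 1%nat \/ p = 2%nat \/ p = 3%nat) by lia.
  destruct Hp' as [-> | [-> | ->]]; simpl; lra.
Qed.

Lemma Lop_abs_ge p q dx : 0 < dx < del -> dx <= 1 -> (1 <= p <= 3)%nat -> (q <= 3)%nat ->
  K * dx <= Rabs (D p) / 2 -> Rabs (D p) / 2 * dx ^ p <= Rabs (Lop xs c f p q dx).
Proof.
  intros Hdx Hdx1 Hp Hq HKdx.
  pose proof (Hcons dx Hdx p q Hp Hq) as Herr.
  pose proof (Rabs_triang_inv (dx ^ p * D p) (dx ^ p * D p - Lop xs c f p q dx)) as Htri.
  replace (dx ^ p * D p - (dx ^ p * D p - Lop xs c f p q dx)) with (Lop xs c f p q dx)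
    in Htri by ring.
  rewrite <- Rabs_Ropp, Ropp_minus_distr in Herr.
  rewrite Rabs_mult, (Rabs_pos_eq (dx ^ p)) in Htri by (apply pow_le; lra).
  assert (Hpow : dx ^ 4 <= dx * dx ^ p)
    by (apply (pow_antimono_le1 dx (S p) 4); [lra | lia]).
  pose proof (pow_le dx p ltac:(lra)). nra.
Qed.

Lemma beta_ge p q dx : 0 < dx < del -> dx <= 1 -> (1 <= p <= 3)%nat -> (q <= 3)%nat ->
  K * dx <= Rabs (D p) / 2 ->
  indicator_weight xi1 xi2 p * Rabs (D p) / 2 * dx ^ p <= beta xs xi1 xi2 c f q dx.
Proof.
  intros Hdx Hdx1 Hp Hq HKdx.
  eapply Rle_trans; [|apply (beta_ge_weighted_Lop p q dx Hp)].
  assert (Hw : 0 <= indicator_weight xi1 xi2 p)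
    by (destruct p as [|[|[|p]]]; simpl; lra).
  replace (indicator_weight xi1 xi2 p * Rabs (D p) / 2 * dx ^ p) with
    (indicator_weight xi1 xi2 p * (Rabs (D p) / 2 * dx ^ p)) by (unfold Rdiv; ring).
  apply Rmult_le_compat_l; [exact Hw|]. apply Lop_abs_ge; assumption.
Qed.

Lemma indicator_ratio_le p q dx : 0 < dx < del -> dx <= 1 -> (1 <= p <= 3)%nat -> (q <= 3)%nat ->
  D p <> 0 -> K * dx <= Rabs (D p) / 2 ->
  0 <= zeta xs xi1 xi2 c f dx / beta xs xi1 xi2 c f q dx ^ 2
    <= (12 * K / (indicator_weight xi1 xi2 p * Rabs (D p)) * dx ^ (4 - p)) ^ 2.
Proof.
  intros Hdx Hdx1 Hp Hq HDp HKdx.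
  set (b := indicator_weight xi1 xi2 p * Rabs (D p) / 2).
  assert (Hw : 0 < indicator_weight xi1 xi2 p) by (destruct p as [|[|[|p]]]; simpl; lra).
  assert (Hb : 0 < b) by (unfold b; pose proof (Rabs_pos_lt _ HDp); nra).
  assert (Hbeta : 0 < b * dx ^ p <= beta xs xi1 xi2 c f q dx).
  { split; [apply Rmult_lt_0_compat; [exact Hb | apply pow_lt; lra]|].
    apply beta_ge; assumption. }
  assert (Hz : 0 <= zeta xs xi1 xi2 c f dx) by (unfold zeta; apply pow_le, Rabs_pos).
  split.
  - unfold Rdiv. apply Rmult_le_pos; [exact Hz | left; apply Rinv_0_lt_compat, pow_lt; lra].
  - apply Rle_trans with (zeta xs xi1 xi2 c f dx / (b * dx ^ p) ^ 2).
    + unfold Rdiv. apply Rmult_le_compat_l; [exact Hz|].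
      apply Rinv_le_contravar; [apply pow_lt; lra | apply pow_incr; lra].
    + apply Rle_trans with ((6 * K * dx ^ 4) ^ 2 / (b * dx ^ p) ^ 2).
      * unfold Rdiv. apply Rmult_le_compat_r; [left; apply Rinv_0_lt_compat, pow_lt; lra|].
        apply zeta_le; exact Hdx.
      * replace (dx ^ 4) with (dx ^ (4 - p) * dx ^ p) by (rewrite <- pow_add; f_equal; lia).
        right. unfold b. field.
        repeat split; try lra; try (apply pow_nonzero; lra). apply Rabs_no_R0; exact HDp.
Qed.

Lemma omega_bigO s k p : (k <= 3)%nat -> (1 <= p <= 3)%nat -> 0 < del -> D p <> 0 ->
  bigO0 (fun dx => omega xs xi1 xi2 c f s k dx - dlin k) (fun dx => dx ^ ((8 - 2 * p) * s)).
Proof.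
  intros Hk Hp Hdel HDp.
  set (A := 12 * K / (indicator_weight xi1 xi2 p * Rabs (D p))).
  set (eta := Rabs (D p) / (2 * (K + 1))).
  assert (Heta : 0 < eta) by (unfold eta; pose proof (Rabs_pos_lt _ HDp);
    apply Rdiv_lt_0_compat; lra).
  exists (A ^ (2 * s)), (Rmin del (Rmin 1 eta)).
  split; [repeat apply Rmin_pos; lra|]. intros dx Hdx.
  assert (Rmin del (Rmin 1 eta) <= del) by apply Rmin_l.
  assert (Rmin del (Rmin 1 eta) <= Rmin 1 eta) by apply Rmin_r.
  assert (Rmin 1 eta <= 1) by apply Rmin_l. assert (Rmin 1 eta <= eta) by apply Rmin_r.
  assert (HKdx : K * dx <= Rabs (D p) / 2).
  { replace (Rabs (D p) / 2) with ((K + 1) * eta) by (unfold eta; field; lra). nra. }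
  assert (Hr : forall q, (q <= 3)%nat ->
    0 <= (zeta xs xi1 xi2 c f dx / beta xs xi1 xi2 c f q dx ^ 2) ^ s
      <= A ^ (2 * s) * dx ^ ((8 - 2 * p) * s)).
  { intros q Hq.
    pose proof (indicator_ratio_le p q dx ltac:(lra) ltac:(lra) Hp Hq HDp HKdx) as Hratio.
    split; [apply pow_le; lra|].
    replace ((8 - 2 * p) * s)%nat with ((4 - p) * (2 * s))%nat by lia.
    rewrite (pow_mult dx), <- Rpow_mult_distr, pow_mult.
    apply pow_incr. exact Hratio. }
  unfold omega, alpha.
  rewrite (Rabs_pos_eq (dx ^ _)) by (apply pow_le; lra).
  exact (normalized_weight_dev_le
    (fun q => (zeta xs xi1 xi2 c f dx / beta xs xi1 xi2 c f q dx ^ 2) ^ s) _ k Hr Hk).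
Qed.
End SmoothnessIndicators.

Theorem mainTheorem3
  (xs a b : R) (f f1 f2 f3 f4 : R -> R) (xi1 xi2 : R)
  (c : R -> nat -> nat -> nat -> R)
  (HI : a < xs < b)
  (Hf1 : forall x, a < x < b -> derivable_pt_lim f x (f1 x))
  (Hf2 : forall x, a < x < b -> derivable_pt_lim f1 x (f2 x))
  (Hf3 : forall x, a < x < b -> derivable_pt_lim f2 x (f3 x))
  (Hf4 : forall x, a < x < b -> derivable_pt_lim f3 x (f4 x))
  (Hf4c : forall x, a < x < b -> continuity_pt f4 x)
  (Hxi1 : 0 < xi1 <= 1) (Hxi2 : 0 < xi2 <= 1)
  (Hc : is_stencil_coeff xs c) :
  forall (s k : nat), (1 <= s)%nat -> (k <= 3)%nat ->
    let w := fun dx => omega xs xi1 xi2 c f s k dx - dlin k in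
    (* (i) *)
    (f1 xs <> 0 -> bigO0 w (fun dx => dx ^ (6 * s))) /\
    (* (ii) *)
    (f1 xs = 0 -> f2 xs <> 0 -> bigO0 w (fun dx => dx ^ (4 * s))) /\
    (* (iii) *)
    (f1 xs = 0 -> f2 xs = 0 -> f3 xs <> 0 -> bigO0 w (fun dx => dx ^ (2 * s))) /\
    (* consequence *)
    (f1 xs <> 0 -> bigO0 w (fun dx => dx ^ 4)) /\
    (f1 xs = 0 -> f2 xs <> 0 -> bigO0 w (fun dx => dx ^ 4)) /\
    (f1 xs = 0 -> f2 xs = 0 -> f3 xs <> 0 -> (2 <= s)%nat ->
       bigO0 w (fun dx => dx ^ 4)).
Proof.
  intros s k Hs Hk w.
  destruct (taylor3_remainder xs a b f f1 f2 f3 f4 HI Hf1 Hf2 Hf3 Hf4 (Hf4c xs HI))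
    as [M [d [HM [Hd Htaylor]]]].
  assert (HK : 0 <= 28 * (M * (7/2) ^ 4)) by (pose proof (pow_le (7/2) 4 ltac:(lra)); nra).
  assert (Hcase : forall p, (1 <= p <= 3)%nat -> derivs_at f f1 f2 f3 xs p <> 0 ->
    bigO0 w (fun dx => dx ^ ((8 - 2 * p) * s))).
  { intros p Hp HDp.
    apply (omega_bigO xs xi1 xi2 c f (derivs_at f f1 f2 f3 xs) (28 * (M * (7/2) ^ 4)) (d / 4));
      auto; [|lra].
    intros dx Hdx sp q Hsp Hq.
    exact (Lop_consistency xs c f _ M d dx sp q Hc HM Htaylor Hdx Hsp Hq). }
  assert (H1 : f1 xs <> 0 -> bigO0 w (fun dx => dx ^ (6 * s)))
    by (intros H; apply (Hcase 1%nat); [lia | exact H]).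
  assert (H2 : f2 xs <> 0 -> bigO0 w (fun dx => dx ^ (4 * s)))
    by (intros H; apply (Hcase 2%nat); [lia | exact H]).
  assert (H3 : f3 xs <> 0 -> bigO0 w (fun dx => dx ^ (2 * s)))
    by (intros H; apply (Hcase 3%nat); [lia | exact H]).
  split; [exact H1|]. split; [intros _; exact H2|]. split; [intros _ _; exact H3|].
  split; [intros H; apply (bigO0_pow_weaken w 4 (6 * s)); [lia | auto]|].
  split; [intros _ H; apply (bigO0_pow_weaken w 4 (4 * s)); [lia | auto]|].
  intros _ _ H Hs2. apply (bigO0_pow_weaken w 4 (2 * s)); [lia | auto].
Qed.
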